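(* Let $\mathbb V$ be the 2-vector space of a 2-term complex $V_1\xrightarrow{\mathrm d}V_0$ and $L$ a Dirac structure of the omni-Lie 2-algebra $\mathfrak{gl}(\mathbb V)\oplus\mathbb V$. Then the normalizer $N_L$ is a sub-Lie 2-algebra of $\mathfrak{gl}(\mathbb V)$, i.e. it is a 2-sub-vector space (in particular $\delta(N_L\cap\mathrm{End}^1(\mathbb V))\subset N_L$) closed under the bracket of $\mathfrak{gl}(\mathbb V)$.
   Context: All vector spaces are finite-dimensional over $\mathbb R$. A 2-sub-vector space has subspaces of objects and morphisms with restricted structure maps; a sub-Lie 2-algebra is a 2-sub-vector space closed under the bracket. For a 2-term complex $V_1\xrightarrow{\mathrm d}V_0$, $\mathbb V$ has objects $V_0$, morphisms $V_0\oplus V_1$ ($u+m$), $s(u+m)=u$, $t(u+m)=u+\mathrm dm$. Let $\mathrm{End}^0_{\mathrm d}(\mathbb V)=\{A=(A_0,A_1):A_0\mathrm d=\mathrm dA_1\}$, $\mathrm{End}^1(\mathbb V)=\mathrm{Hom}(V_0,V_1)$, $\delta\phi=(\mathrm d\phi,\phi\mathrm d)$; brackets $[A,B]$ componentwise commutator, $[A,\phi]=-[\phi,A]=A_1\phi-\phi A_0$, $[\phi,\psi]_\delta=\phi\mathrm d\psi-\psi\mathrm d\phi$. The strict Lie 2-algebra $\mathfrak{gl}(\mathbb V)$ has objects $\mathrm{End}^0_{\mathrm d}(\mathbb V)$, morphisms $A+\phi$ ($\phi\in\mathrm{End}^1(\mathbb V)$ identified with the morphism $0+\phi$), $s(A+\phi)=A$,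 $t(A+\phi)=A+\delta\phi$, bracket $[A+\phi,B+\psi]=[A,B]+[\phi,\psi]_\delta+[A,\psi]+[\phi,B]$, and acts on $\mathbb V$ by $A(u)=A_0u$, $(A+\phi)(u+m)=A_0u+(A_1m+\phi(u+\mathrm dm))$. The omni-Lie 2-algebra is $\mathfrak{gl}(\mathbb V)\oplus\mathbb V$ with pairing $\langle A+\phi+u+m,B+\psi+v+n\rangle=\tfrac12((A+\phi)(v+n)+(B+\psi)(u+m))$ and bracket $[\![A+\phi+u+m,B+\psi+v+n]\!]=[A+\phi,B+\psi]+\tfrac12((A+\phi)(v+n)-(B+\psi)(u+m))$ (similar formulas on objects), and $\{e_1,e_2\}=[\![e_1,e_2]\!]+\langle e_1,e_2\rangle$, i.e. $\{A+\phi+u+m,B+\psi+v+n\}=[A+\phi,B+\psi]+(A+\phi)(v+n)$. $L^\perp=\{e:\langle e,l\rangle=0\ \forall l\in L\}$; a Dirac structure is a 2-sub-vector space $L=L^\perp$ closed under $[\![\cdot,\cdot]\!]$. The normalizer of $K\subset\mathfrak{gl}(\mathbb V)\oplus\mathbb V$ is $N_K=\{N\in\mathfrak{gl}(\mathbb V):\{N,k\}\in K\ \forall k\in K\}$ (levelwise). *)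

(* Vector spaces are column-vector spaces 'cV[R]_n over a
   real field R (statement holds for every realFieldType, in particular R).
   V1 = 'cV_n1, V0 = 'cV_n0, d : 'M_(n0,n1) acting by v |-> d *m v. *)
From mathcomp Require Import all_boot all_order all_algebra.
Set Implicit Arguments. Unset Strict Implicit. Unset Printing Implicit Defensive.
Import GRing.Theory.
Local Open Scope ring_scope.

Section Omni.
Variables (R : realFieldType) (n0 n1 : nat) (d : 'M[R]_(n0, n1)).

(* objects of gl(V): pairs (A0,A1) (constrained by End0 below) *)
Definition glo := ('M[R]_n0 * 'M[R]_n1)%type.
(* morphisms of gl(V): A + phi, phi in Hom(V0,V1) = 'M_(n1,n0) *)
Definition glm := (glo * 'M[R]_(n1, n0))%type.
Definition Vo := 'cV[R]_n0.
Definition Vm := ('cV[R]_n0 * 'cV[R]_n1)%type.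
Definition omo := (glo * Vo)%type.
Definition omm := (glm * Vm)%type.

Definition End0 (A : glo) : Prop := A.1 *m d = d *m A.2.

Definition delta (phi : 'M[R]_(n1, n0)) : glo := (d *m phi, phi *m d).

Definition gl_s (X : glm) : glo := X.1.
Definition gl_t (X : glm) : glo := X.1 + delta X.2.
Definition gl_id (A : glo) : glm := (A, 0).

Definition br_o (A B : glo) : glo :=
  (A.1 *m B.1 - B.1 *m A.1, A.2 *m B.2 - B.2 *m A.2).
Definition br_Aphi (A : glo) (phi : 'M[R]_(n1, n0)) : 'M[R]_(n1, n0) :=
  A.2 *m phi - phi *m A.1.
Definition br_delta (phi psi : 'M[R]_(n1, n0)) : 'M[R]_(n1, n0) :=
  phi *m d *m psi - psi *m d *m phi.
(* [A+phi, B+psi] = [A,B] + [phi,psi]_delta + [A,psi] + [phi,B] *)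
Definition br_m (X Y : glm) : glm :=
  (br_o X.1 Y.1, br_delta X.2 Y.2 + br_Aphi X.1 Y.2 - br_Aphi Y.1 X.2).

Definition act_o (A : glo) (u : Vo) : Vo := A.1 *m u.
Definition act_m (X : glm) (w : Vm) : Vm :=
  (X.1.1 *m w.1, X.1.2 *m w.2 + X.2 *m (w.1 + d *m w.2)).

Definition V_t (w : Vm) : Vo := w.1 + d *m w.2.
Definition om_s (e : omm) : omo := (gl_s e.1, e.2.1).
Definition om_t (e : omm) : omo := (gl_t e.1, V_t e.2).
Definition om_id (e : omo) : omm := (gl_id e.1, (e.2, 0)).

Definition half : R := (2%:R)^-1.

Definition pair_o (e f : omo) : Vo := half *: (act_o e.1 f.2 + act_o f.1 e.2).
Definition pair_m (e f : omm) : Vm := half *: (act_m e.1 f.2 + act_m f.1 e.2).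

Definition cbr_o (e f : omo) : omo :=
  (br_o e.1 f.1, half *: (act_o e.1 f.2 - act_o f.1 e.2)).
Definition cbr_m (e f : omm) : omm :=
  (br_m e.1 f.1, half *: (act_m e.1 f.2 - act_m f.1 e.2)).

Definition curly_o (N : glo) (k : omo) : omo := (br_o N k.1, act_o N k.2).
Definition curly_m (N : glm) (k : omm) : omm := (br_m N k.1, act_m N k.2).

Definition subspace (T : lmodType R) (S : T -> Prop) : Prop :=
  S 0 /\ forall (a : R) (x y : T), S x -> S y -> S (a *: x + y).

Definition om_2sub (K0 : omo -> Prop) (K1 : omm -> Prop) : Prop :=
  [/\ subspace K0 /\ subspace K1,
      (forall e, K0 e -> End0 e.1) /\ (forall e, K1 e -> End0 e.1.1),
      (forall e, K1 e -> K0 (om_s e) /\ K0 (om_t e))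
    & (forall e, K0 e -> K1 (om_id e))].

(* Dirac structure: L = L^perp levelwise, closed under [[ , ]] *)
Definition Dirac (L0 : omo -> Prop) (L1 : omm -> Prop) : Prop :=
  [/\ om_2sub L0 L1,
      (forall e, L0 e <-> (End0 e.1 /\ forall l, L0 l -> pair_o e l = 0)),
      (forall e, L1 e <-> (End0 e.1.1 /\ forall l, L1 l -> pair_m e l = 0)),
      (forall e f, L0 e -> L0 f -> L0 (cbr_o e f))
    & (forall e f, L1 e -> L1 f -> L1 (cbr_m e f))].

Definition Norm0 (K0 : omo -> Prop) (N : glo) : Prop :=
  End0 N /\ forall k, K0 k -> K0 (curly_o N k).
Definition Norm1 (K1 : omm -> Prop) (N : glm) : Prop :=
  End0 N.1 /\ forall k, K1 k -> K1 (curly_m N k).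

Definition gl_sub_Lie2 (N0 : glo -> Prop) (N1 : glm -> Prop) : Prop :=
  [/\ subspace N0 /\ subspace N1,
      (forall A, N0 A -> End0 A) /\ (forall X, N1 X -> End0 X.1),
      (forall X, N1 X -> N0 (gl_s X) /\ N0 (gl_t X)),
      (forall A, N0 A -> N1 (gl_id A))
    & (forall A B, N0 A -> N0 B -> N0 (br_o A B)) /\
      (forall X Y, N1 X -> N1 Y -> N1 (br_m X Y))].

End Omni.

From mathcomp Require Import all_boot all_order all_algebra.
Set Implicit Arguments. Unset Strict Implicit. Unset Printing Implicit Defensive.
Import GRing.Theory.
Local Open Scope ring_scope.

(* At both levels the action {N, -} of gl(V) on gl(V) (+) V is linear in N and
   is a representation, {[N, M], k} = {N, {M, k}} - {M, {N, k}} (on the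
   morphism level this needs the End0 conditions).  Hence the normalizer of
   a subspace is a subspace closed under the bracket.  Source and target are
   compatible because {X, 1_k} has source {s X, k} and target {t X, k}.
   The one non-formal point is that 1_A normalizes L1 when A normalizes L0:
   as L1 is maximal isotropic it suffices that <{1_A, k}, l> = 0 for k, l in
   L1, and this pairing is a combination of <{A, s k}, s l> in L0 and of the
   pairings of the identity morphisms of {A, s k}, t l and {A, t l} with
   elements of L1, all of which vanish by isotropy. *)

Inductive zterm := ZAtom of nat | ZOpp of zterm | ZAdd of zterm & zterm | ZZero.

Fixpoint zeval (V : zmodType) (atoms : seq V) (t : zterm) : V :=
  match t with
  | ZAtom i => atoms`_i
  | ZOpp a => - zeval atoms a
  | ZAdd a b => zeval atoms a + zeval atoms b
  | ZZero => 0
  end.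

Fixpoint zcoef (t : zterm) (i : nat) : int :=
  match t with
  | ZAtom j => (i == j)%:Z
  | ZOpp a => - zcoef a i
  | ZAdd a b => zcoef a i + zcoef b i
  | ZZero => 0
  end.

Lemma zevalE (V : zmodType) (atoms : seq V) (t : zterm) :
  zeval atoms t = \sum_(i < size atoms) atoms`_i *~ zcoef t i.
Proof.
elim: t => [j|a IH|a IHa b IHb|] /=.
- have [lt_j|le_j] := ltnP j (size atoms).
    rewrite (bigD1 (Ordinal lt_j)) //= eqxx mulr1z big1 ?addr0 // => i /negbTE.
    by rewrite -val_eqE /= => ->; rewrite mulr0z.
  rewrite nth_default // big1 // => i _.
  by rewrite ltn_eqF ?mulr0z // (leq_trans (ltn_ord i) le_j).
- by rewrite IH -sumrN; apply: eq_bigr => i _; rewrite mulrNz.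
- by rewrite IHa IHb -big_split; apply: eq_bigr => i _; rewrite mulrzDr.
- by rewrite big1 // => i _; rewrite mulr0z.
Qed.

Lemma zeval_eq (V : zmodType) (atoms : seq V) (a b : zterm) :
  all (fun i => zcoef a i == zcoef b i) (iota 0 (size atoms)) ->
  zeval atoms a = zeval atoms b.
Proof.
move/allP=> eq_coef; rewrite !zevalE; apply: eq_bigr => i _.
by rewrite (eqP (eq_coef i _)) // mem_iota add0n ltn_ord.
Qed.

(* Atoms are compared up to unification: the same matrix product may carry
   syntactically different (but convertible) structure instances. *)
Ltac convertible x y :=
  constr:(ltac:(first [unify x y; exact true | exact false]) : bool).

Ltac zatom_index x atoms :=
  lazymatch atoms with
  | ?y :: ?atoms' =>
      lazymatch convertible x y with
      | true => constr:(0%N)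
      | false => let n := zatom_index x atoms' in constr:(S n)
      end
  end.

Ltac zadd_atom x atoms :=
  let rec add l :=
    lazymatch l with
    | ?y :: ?l' => lazymatch convertible x y with true => atoms | false => add l' end
    | _ => constr:(x :: atoms)
    end in
  add atoms.

Ltac zatoms t atoms :=
  lazymatch t with
  | ?a + ?b => let atoms' := zatoms a atoms in zatoms b atoms'
  | - ?a => zatoms a atoms
  | 0 => atoms
  | _ => zadd_atom t atoms
  end.

Ltac zreify t atoms :=
  lazymatch t with
  | ?a + ?b =>
      let x := zreify a atoms in let y := zreify b atoms in constr:(ZAdd x y)
  | - ?a => let x := zreify a atoms in constr:(ZOpp x)
  | 0 => constr:(ZZero)
  | _ => let n := zatom_index t atoms in constr:(ZAtom n)
  end.

(* Proves an equation in a zmodType that holds in the free abelian group on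
   its non-additive subterms. *)
Ltac abel :=
  lazymatch goal with |- ?a = ?b =>
    let V := type of a in
    let atoms := zatoms a (@nil V) in
    let atoms := zatoms b atoms in
    let ra := zreify a atoms in
    let rb := zreify b atoms in
    change (zeval atoms ra = zeval atoms rb); apply: zeval_eq; vm_compute;
    reflexivity
  end.

Ltac mxnorm :=
  repeat progress rewrite ?mulmxDl ?mulmxDr ?mulmxBl ?mulmxBr ?mulNmx ?mulmxN
    ?mulmxA ?mulmx0 ?mul0mx ?scaler0 ?scalerDr ?scalerBr ?scalerN ?scalerA
    -?scalemxAl -?scalemxAr.

Section OmniLie.
Variables (R : realFieldType) (n0 n1 : nat) (d : 'M[R]_(n0, n1)).

Lemma End0_mulmx_d (A : glo R n0 n1) p (P : 'M[R]_(p, n0)) :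
  End0 d A -> P *m A.1 *m d = P *m d *m A.2.
Proof. by move=> eA; rewrite -mulmxA eA mulmxA. Qed.

Lemma End0_subspace : subspace (End0 d).
Proof.
split=> [|a [A0 A1] [B0 B1]]; rewrite /End0 /=; first by rewrite mul0mx mulmx0.
by move=> eA eB; rewrite mulmxDl mulmxDr -scalemxAl -scalemxAr eA eB.
Qed.

Lemma End0_fst_subspace : subspace (fun X : glm R n0 n1 => End0 d X.1).
Proof. by have [E0 E_lin] := End0_subspace; split=> [|a X Y]; [exact: E0 | exact: E_lin]. Qed.

Lemma End0_br (A B : glo R n0 n1) : End0 d A -> End0 d B -> End0 d (br_o A B).
Proof.
rewrite /End0 /= => eA eB.
by rewrite mulmxBl mulmxBr -!mulmxA eA eB !mulmxA eA eB.
Qed.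

Lemma End0_gl_t (X : glm R n0 n1) : End0 d X.1 -> End0 d (gl_t d X).
Proof. by rewrite /End0 /= => eX; rewrite mulmxDl mulmxDr eX !mulmxA. Qed.

Lemma curly_o_linear a (N M : glo R n0 n1) (k : omo R n0 n1) :
  curly_o (a *: N + M) k = a *: curly_o N k + curly_o M k.
Proof.
repeat apply: injective_projections.
all: rewrite /= /act_o /=; mxnorm; abel.
Qed.

Lemma curly_m_linear a (N M : glm R n0 n1) (k : omm R n0 n1) :
  curly_m d (a *: N + M) k = a *: curly_m d N k + curly_m d M k.
Proof.
repeat apply: injective_projections.
all: rewrite /= /br_delta /br_Aphi /act_m /=; mxnorm; abel.
Qed.

Lemma curly_o_br (A B : glo R n0 n1) (k : omo R n0 n1) :
  curly_o (br_o A B) k = curly_o A (curly_o B k) - curly_o B (curly_o A k).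
Proof.
repeat apply: injective_projections.
all: rewrite /= /act_o /=; mxnorm; abel.
Qed.

Lemma curly_m_br (X Y : glm R n0 n1) (k : omm R n0 n1) :
  End0 d X.1 -> End0 d Y.1 -> End0 d k.1.1 ->
  curly_m d (br_m d X Y) k =
    curly_m d X (curly_m d Y k) - curly_m d Y (curly_m d X k).
Proof.
move=> eX eY eK; repeat apply: injective_projections.
all: rewrite /= /br_delta /br_Aphi /act_m /=; mxnorm.
all: rewrite ?eX ?eY ?eK ?(End0_mulmx_d _ eX) ?(End0_mulmx_d _ eY) ?(End0_mulmx_d _ eK).
all: mxnorm; abel.
Qed.

Lemma om_t_curly_id (X : glm R n0 n1) (k : omo R n0 n1) : End0 d k.1 ->
  om_t d (curly_m d X (om_id k)) = curly_o (gl_t d X) k.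
Proof.
move=> eK; repeat apply: injective_projections.
all: rewrite /= /br_delta /br_Aphi /act_m /act_o /V_t /=; mxnorm.
all: rewrite ?eK ?(End0_mulmx_d _ eK); mxnorm; abel.
Qed.

Lemma pair_m_curly_id (A : glo R n0 n1) (k l : omm R n0 n1) : End0 d A ->
  pair_m d (curly_m d (gl_id A) k) l =
    (pair_o (curly_o A (om_s k)) (om_s l),
     (pair_m d (om_id (curly_o A (om_s k))) l).2
       + A.2 *m (pair_m d (om_id (om_t d l)) k).2
       - (pair_m d (om_id (curly_o A (om_t d l))) k).2).
Proof.
move=> eA; repeat apply: injective_projections.
all: rewrite /= /pair_o /br_delta /br_Aphi /act_m /act_o /V_t /=; mxnorm.
all: rewrite ?eA ?(End0_mulmx_d _ eA); mxnorm.
all: abel.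
Qed.

End OmniLie.

Section Normalizer.
Variables (R : realFieldType) (T U : lmodType R) (act : T -> U -> U).
Variables (E : T -> Prop) (K : U -> Prop).
Hypothesis K_subspace : subspace K.

Lemma subspaceB (x y : U) : K x -> K y -> K (x - y).
Proof.
have [_ K_lin] := K_subspace; move=> Kx Ky.
by rewrite addrC -scaleN1r; apply: K_lin.
Qed.

Lemma normalizer_subspace :
  subspace E ->
  (forall a N M k, act (a *: N + M) k = a *: act N k + act M k) ->
  subspace (fun N => E N /\ forall k, K k -> K (act N k)).
Proof.
move=> [E0 E_lin] act_lin; have [K0 K_lin] := K_subspace.
have act0 k : act 0 k = 0.
  by have := act_lin (-1) 0 0 k; rewrite scaler0 addr0 scaleN1r addNr.
split=> [|a N M [EN KN] [EM KM]]; first by split=> // k _; rewrite act0.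
by split=> [|k Kk]; [exact: E_lin | rewrite act_lin; apply: K_lin; [apply: KN | apply: KM]].
Qed.

Lemma normalizer_br_closed (br : T -> T -> T) :
  (forall N M, E N -> E M -> E (br N M)) ->
  (forall N M k, E N -> E M -> K k ->
     act (br N M) k = act N (act M k) - act M (act N k)) ->
  forall N M, E N /\ (forall k, K k -> K (act N k)) ->
              E M /\ (forall k, K k -> K (act M k)) ->
              E (br N M) /\ (forall k, K k -> K (act (br N M) k)).
Proof.
move=> E_br act_br N M [EN KN] [EM KM]; split=> [|k Kk]; first exact: E_br.
by rewrite act_br //; apply: subspaceB; [apply: KN; apply: KM | apply: KM; apply: KN].
Qed.

End Normalizer.

Section DiracNormalizer.
Variables (R : realFieldType) (n0 n1 : nat) (d : 'M[R]_(n0, n1)).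
Variables (L0 : omo R n0 n1 -> Prop) (L1 : omm R n0 n1 -> Prop).
Hypothesis L_Dirac : Dirac d L0 L1.

Lemma Norm0_gl_s_t (X : glm R n0 n1) :
  Norm1 d L1 X -> Norm0 d L0 (gl_s X) /\ Norm0 d L0 (gl_t d X).
Proof.
have [[_ [L0_End0 _] L1_s_t L1_id] _ _ _ _] := L_Dirac.
move=> [eX NX]; have L1_curly_id k : L0 k -> L1 (curly_m d X (om_id k)).
  by move=> L0k; apply/NX/L1_id.
split; split=> [|k L0k]; first exact: eX.
- exact: (L1_s_t _ (L1_curly_id k L0k)).1.
- exact: End0_gl_t.
- by rewrite -om_t_curly_id; [exact: (L1_s_t _ (L1_curly_id k L0k)).2 | exact: L0_End0].
Qed.

Lemma Norm1_gl_id (A : glo R n0 n1) : Norm0 d L0 A -> Norm1 d L1 (gl_id A).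
Proof.
have [[_ [_ L1_End0] L1_s_t L1_id] L0_perp L1_perp _ _] := L_Dirac.
have iso0 e f : L0 e -> L0 f -> pair_o e f = 0 by move=> /L0_perp[_]; apply.
have iso1 e f : L1 e -> L1 f -> pair_m d e f = 0 by move=> /L1_perp[_]; apply.
move=> [eA NA]; split=> // k L1k; have [L0sk L0tk] := L1_s_t _ L1k.
apply/L1_perp; split=> [|l L1l]; first exact: End0_br eA (L1_End0 _ L1k).
have [L0sl L0tl] := L1_s_t _ L1l.
rewrite pair_m_curly_id // (iso0 _ _ (NA _ L0sk) L0sl).
rewrite (iso1 _ _ (L1_id _ (NA _ L0sk)) L1l) (iso1 _ _ (L1_id _ L0tl) L1k).
by rewrite (iso1 _ _ (L1_id _ (NA _ L0tl)) L1k) mulmx0 addr0 subr0.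
Qed.

End DiracNormalizer.

Theorem mainTheorem11 (R : realFieldType) (n0 n1 : nat) (d : 'M[R]_(n0, n1))
    (L0 : omo R n0 n1 -> Prop) (L1 : omm R n0 n1 -> Prop) :
  Dirac d L0 L1 ->
  gl_sub_Lie2 d (Norm0 d L0) (Norm1 d L1).
Proof.
move=> L_Dirac; have [[[L0_sub L1_sub] [_ L1_End0] _ _] _ _ _ _] := L_Dirac.
split.
- split; apply: normalizer_subspace => //.
  + exact: End0_subspace.
  + exact: curly_o_linear.
  + exact: End0_fst_subspace.
  + exact: curly_m_linear.
- by split=> ? [].
- exact: Norm0_gl_s_t.
- exact: Norm1_gl_id.
- split; apply: normalizer_br_closed => //.
  + exact: End0_br.
  + by move=> *; apply: curly_o_br.
  + by move=> X Y; apply: End0_br.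
  + by move=> X Y k eX eY /L1_End0; apply: curly_m_br.
Qed.
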